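(* If $n>3$, then $R(U_n)$ is dense in $\mathbb{C}$.
   Context: Let $\mathbf{T}=\{z\in\mathbb{C}:|z|=1\}$. An angle is an element of the quotient group $\mathbf{T}/\{\pm1\}$; in formulas an angle is represented by either of its two representatives $u\in\mathbf{T}$. For $p\in\mathbb{C}$ and an angle $u$, let $L_u(p)=\{p+ru: r\in\mathbb{R}\}$. For distinct angles $u,v$ and $p,q\in\mathbb{C}$, $I_{u,v}(p,q)$ denotes the unique point of $L_u(p)\cap L_v(q)$. For a subgroup $U$ of $\mathbf{T}/\{\pm1\}$, $R(U)$ denotes the smallest subset of $\mathbb{C}$ that contains $0$ and $1$ and such that $I_{u,v}(p,q)\in R(U)$ whenever $p,q\in R(U)$ and $u,v$ are distinct elements of $U$. For $n\ge 3$, $U_n$ denotes the cyclic subgroup of $\mathbf{T}/\{\pm1\}$ of order $n$ generated by the class of $e^{i\pi/n}$. *)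

From Stdlib Require Import Reals ZArith.
Open Scope R_scope.

Definition C : Type := (R * R)%type.
Definition Cadd (z w : C) : C := (fst z + fst w, snd z + snd w).
Definition Copp (z : C) : C := (- fst z, - snd z).
Definition Cscal (r : R) (z : C) : C := (r * fst z, r * snd z).
Definition C0 : C := (0, 0).
Definition C1 : C := (1, 0).

Definition cexpi (t : R) : C := (cos t, sin t).

(* u : T represents an element of the subgroup U_n of T/{+-1} generated by
   the class of e^{i pi/n}: u = e^{i k pi / n} for some integer k
   (this includes both representatives, since e^{i (k+n) pi/n} = - e^{i k pi/n}). *)
Definition in_Un (n : nat) (u : C) : Prop :=
  exists k : Z, u = cexpi (IZR k * PI / INR n).

(* equality of angles (classes in T/{+-1}) *)
Definition same_angle (u v : C) : Prop := u = v \/ u = Copp v.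

Definition on_line (u p z : C) : Prop := exists r : R, z = Cadd p (Cscal r u).

(* R(U_n): smallest set containing 0 and 1 and closed under taking the
   intersection point I_{u,v}(p,q) of L_u(p) and L_v(q) for distinct angles
   u, v in U_n.  (For distinct angles the intersection is a single point.) *)
Inductive RU (n : nat) : C -> Prop :=
| RU0 : RU n C0
| RU1 : RU n C1
| RUI : forall (p q u v z : C),
    RU n p -> RU n q -> in_Un n u -> in_Un n v -> ~ same_angle u v ->
    on_line u p z -> on_line v q z -> RU n z.

Definition Cdist2 (z w : C) : R := (fst z - fst w)^2 + (snd z - snd w)^2.

Definition dense_in_C (S : C -> Prop) : Prop :=
  forall (z : C) (eps : R), 0 < eps -> exists w : C, S w /\ Cdist2 z w < eps ^ 2.

(* Let θ = π/n; since n > 3 the directions e^{iθ}, e^{2iθ}, e^{3iθ} lie strictly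
   between 0 and π.  Intersecting lines of these directions with the real axis
   shows that S = R(U_n) ∩ ℝ is an additive group containing 1 and stable under
   multiplication by c = sin 3θ sin θ / sin² 2θ = 1 - sin² θ / sin² 2θ ∈ (0,1).
   Hence S contains arbitrarily small positive numbers and is dense in ℝ.
   Finally R(U_n) contains every x + y λ e^{iθ} with x, y ∈ S and a fixed λ ≠ 0,
   and these points are dense in ℂ. *)

From Pilot Require Import Defs.
From Stdlib Require Import Reals ZArith Lra Lia Psatz.
Open Scope R_scope.

Definition dense_in_R (S : R -> Prop) : Prop :=
  forall t eps, 0 < eps -> exists x, S x /\ Rabs (t - x) < eps.

Section AdditiveSubgroup.
Variable A : R -> Prop.
Hypotheses (A0 : A 0) (A_sub : forall x y, A x -> A y -> A (x - y)).

Lemma subgroup_nat_mul k h : A h -> A (INR k * h).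
Proof.
  intros Hh; induction k as [|k IH].
  - now rewrite Rmult_0_l.
  - replace (INR (S k) * h) with (INR k * h - (0 - h)) by (rewrite S_INR; ring).
    auto.
Qed.

Lemma subgroup_int_mul z h : A h -> A (IZR z * h).
Proof.
  intros Hh. destruct (Z.le_ge_cases 0 z) as [Hz|Hz].
  - destruct (IZN z Hz) as [k ->]. rewrite <- INR_IZR_INZ. now apply subgroup_nat_mul.
  - destruct (IZN (- z) ltac:(lia)) as [k Hk].
    replace (IZR z * h) with (0 - INR k * h)
      by (rewrite INR_IZR_INZ, <- Hk, opp_IZR; ring).
    auto using subgroup_nat_mul.
Qed.

Lemma subgroup_dense :
  (forall eps, 0 < eps -> exists h, A h /\ 0 < h < eps) -> dense_in_R A.
Proof.
  intros Hsmall t eps He. destruct (Hsmall eps He) as [h [Hh [hpos hlt]]].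
  exists (IZR (up (t / h) - 1) * h). split; [now apply subgroup_int_mul|].
  destruct (archimed (t / h)) as [Hup1 Hup2]. rewrite minus_IZR.
  assert (Ht : t = t / h * h) by (field; lra).
  apply Rabs_def1; nra.
Qed.

End AdditiveSubgroup.

Lemma small_pos_of_contraction (S : R -> Prop) (c : R) :
  S 1 -> (forall x, S x -> S (x * c)) -> 0 < c < 1 ->
  forall eps, 0 < eps -> exists h, S h /\ 0 < h < eps.
Proof.
  intros S1 Sc [c0 c1] eps He.
  destruct (pow_lt_1_zero c ltac:(rewrite Rabs_right; lra) eps He) as [N HN].
  specialize (HN N (le_n N)). rewrite Rabs_right in HN by (apply Rle_ge, pow_le; lra).
  exists (c ^ N). split; [|split; auto using pow_lt].
  clear HN; induction N as [|N IH]; simpl; auto. rewrite Rmult_comm; auto.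
Qed.

Lemma dense_in_C_of_dense_line (S : R -> Prop) (P : Defs.C -> Prop) (al be : R) :
  dense_in_R S -> be <> 0 ->
  (forall x y, S x -> S y -> P (x + y * al, y * be)) -> dense_in_C P.
Proof.
  intros Sd Hbe HP [z1 z2] eps He.
  assert (Habe : 0 < Rabs be) by now apply Rabs_pos_lt.
  destruct (Sd (z2 / be) (eps / (2 * Rabs be))) as [y [Sy Hy]].
  { apply Rdiv_lt_0_compat; lra. }
  destruct (Sd (z1 - y * al) (eps / 2)) as [x [Sx Hx]]; [lra|].
  exists (x + y * al, y * be). split; [auto|]. unfold Cdist2; cbn [fst snd].
  assert (Hy' : Rabs (z2 - y * be) < eps / 2).
  { replace (z2 - y * be) with (be * (z2 / be - y)) by (field; auto).
    rewrite Rabs_mult.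
    apply Rmult_lt_compat_l with (r := Rabs be) in Hy; [|auto].
    replace (Rabs be * (eps / (2 * Rabs be))) with (eps / 2) in Hy by (field; lra).
    exact Hy. }
  replace (z1 - (x + y * al)) with (z1 - y * al - x) by ring.
  rewrite <- (pow2_abs (z1 - y * al - x)), <- (pow2_abs (z2 - y * be)).
  pose proof (Rabs_pos (z1 - y * al - x)). pose proof (Rabs_pos (z2 - y * be)).
  nra.
Qed.

Definition cross (u v : Defs.C) : R := fst u * snd v - snd u * fst v.

(* I_{u,v}(p,q): crossing p + r u = q + s v with v determines r. *)
Definition meet (u v p q : Defs.C) : Defs.C :=
  Cadd p (Cscal (cross (Cadd q (Copp p)) v / cross u v) u).

Lemma cross_same_angle u v : same_angle u v -> cross u v = 0.
Proof.
  destruct u as [u1 u2], v as [v1 v2]; unfold cross, Copp.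
  intros [E|E]; injection E as -> ->; cbn; ring.
Qed.

Lemma RU_meet n u v p q : RU n p -> RU n q -> in_Un n u -> in_Un n v ->
  cross u v <> 0 -> RU n (meet u v p q).
Proof.
  intros Hp Hq Hu Hv Huv. apply (RUI n p q u v); auto.
  - intros E. apply Huv, cross_same_angle, E.
  - eexists; reflexivity.
  - exists (cross (Cadd q (Copp p)) u / cross u v).
    destruct u as [u1 u2], v as [v1 v2], p as [p1 p2], q as [q1 q2].
    unfold meet, cross, Cadd, Cscal, Copp in *; cbn in *. f_equal; field; auto.
Qed.

Lemma cross_cexpi a b : cross (cexpi a) (cexpi b) = sin (b - a).
Proof. unfold cross, cexpi; cbn. rewrite sin_minus. ring. Qed.

Lemma in_Un_C1 n : in_Un n Defs.C1.
Proof.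
  exists 0%Z. unfold cexpi, Defs.C1. unfold Rdiv. rewrite !Rmult_0_l, cos_0, sin_0.
  reflexivity.
Qed.

Lemma in_Un_cexpi_mul n k : in_Un n (cexpi (IZR k * (PI / INR n))).
Proof. exists k. unfold Rdiv. now rewrite Rmult_assoc. Qed.

Section RealAxis.
Variables (n : nat) (a b : R).
Hypotheses (Ha : in_Un n (cexpi a)) (Hb : in_Un n (cexpi b))
  (sa : sin a <> 0) (sb : sin b <> 0) (sba : sin (b - a) <> 0).

Let cross_a : cross (cexpi a) Defs.C1 <> 0.
Proof. unfold cross, Defs.C1; cbn. lra. Qed.

Let cross_b : cross (cexpi b) Defs.C1 <> 0.
Proof. unfold cross, Defs.C1; cbn. lra. Qed.

Let cross_ab : cross (cexpi a) (cexpi b) <> 0.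
Proof. now rewrite cross_cexpi. Qed.

(* The point P on L_a(y) ∩ L_b(x), moved horizontally onto L_a(0) and then
   along direction b back to the axis, is translated by -y. *)
Lemma RU_real_sub x y : RU n (x, 0) -> RU n (y, 0) -> RU n (x - y, 0).
Proof.
  intros Hx Hy.
  set (P := meet (cexpi a) (cexpi b) (y, 0) (x, 0)).
  set (Q := meet (cexpi a) Defs.C1 Defs.C0 P).
  assert (E : meet (cexpi b) Defs.C1 Q Defs.C0 = (x - y, 0)).
  { subst P Q. unfold meet, cross, cexpi, Cadd, Cscal, Copp, Defs.C0, Defs.C1; cbn.
    rewrite !sin_minus in *. f_equal; field; lra. }
  rewrite <- E. apply RU_meet; auto using RU0, in_Un_C1.
  apply RU_meet; auto using RU0, in_Un_C1.
  apply RU_meet; auto.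
Qed.

Lemma RU_real_scale c x : in_Un n (cexpi c) -> sin c <> 0 -> RU n (x, 0) ->
  RU n (x * (sin b * sin (c - a) / (sin (b - a) * sin c)), 0).
Proof.
  intros Hc sc Hx.
  assert (E : meet (cexpi c) Defs.C1 (meet (cexpi a) (cexpi b) Defs.C0 (x, 0)) Defs.C0
              = (x * (sin b * sin (c - a) / (sin (b - a) * sin c)), 0)).
  { unfold meet, cross, cexpi, Cadd, Cscal, Copp, Defs.C0, Defs.C1; cbn.
    rewrite !sin_minus in *. f_equal; field; lra. }
  rewrite <- E. apply RU_meet; auto using RU0, in_Un_C1.
  - apply RU_meet; auto using RU0.
  - unfold cross, Defs.C1; cbn. lra.
Qed.

Lemma RU_real_comb x y : RU n (x, 0) -> RU n (y, 0) ->
  RU n (x + y * (sin b / sin (b - a) * cos a), y * (sin b / sin (b - a) * sin a)).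
Proof.
  intros Hx Hy.
  assert (E : meet (cexpi a) Defs.C1 (x, 0) (meet (cexpi a) (cexpi b) Defs.C0 (y, 0))
              = (x + y * (sin b / sin (b - a) * cos a), y * (sin b / sin (b - a) * sin a))).
  { unfold meet, cross, cexpi, Cadd, Cscal, Copp, Defs.C0, Defs.C1; cbn.
    rewrite !sin_minus in *. f_equal; field; lra. }
  rewrite <- E. apply RU_meet; auto using in_Un_C1.
  apply RU_meet; auto using RU0.
Qed.

End RealAxis.

Lemma sin_plus_mul_sin_minus x y : sin (x + y) * sin (x - y) = sin x ^ 2 - sin y ^ 2.
Proof.
  rewrite sin_plus, sin_minus.
  pose proof (sin2_cos2 x) as Ex. pose proof (sin2_cos2 y) as Ey. unfold Rsqr in *.
  nra.
Qed.

Lemma contraction_factor_bounds t : 0 < t -> 3 * t < PI ->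
  0 < sin (3 * t) * sin t / (sin (2 * t) * sin (2 * t)) < 1.
Proof.
  intros t0 t3.
  assert (s1 : 0 < sin t) by (apply sin_gt_0; lra).
  assert (s2 : 0 < sin (2 * t)) by (apply sin_gt_0; lra).
  assert (s3 : 0 < sin (3 * t)) by (apply sin_gt_0; lra).
  assert (E : sin (3 * t) * sin t = sin (2 * t) ^ 2 - sin t ^ 2).
  { rewrite <- sin_plus_mul_sin_minus. f_equal; f_equal; ring. }
  split.
  - apply Rdiv_lt_0_compat; nra.
  - rewrite E. apply Rmult_lt_reg_r with (sin (2 * t) * sin (2 * t)); [nra|].
    unfold Rdiv. rewrite Rmult_assoc, Rinv_l by nra. nra.
Qed.

Lemma PI_div_bounds n : (3 < n)%nat -> 0 < PI / INR n /\ 3 * (PI / INR n) < PI.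
Proof.
  intros hn. pose proof PI_RGT_0. apply lt_INR in hn.
  replace (INR 3) with 3 in hn by (cbn; ring).
  split; [apply Rdiv_lt_0_compat; lra|].
  apply Rmult_lt_reg_r with (INR n); [lra|]. field_simplify; nra.
Qed.

Lemma RU_real_axis_dense n t :
  in_Un n (cexpi t) -> in_Un n (cexpi (2 * t)) -> in_Un n (cexpi (3 * t)) ->
  0 < t -> 3 * t < PI -> dense_in_R (fun x => RU n (x, 0)).
Proof.
  intros U1 U2 U3 t0 t3.
  assert (s1 : sin t <> 0) by (apply Rgt_not_eq, sin_gt_0; lra).
  assert (s2 : sin (2 * t) <> 0) by (apply Rgt_not_eq, sin_gt_0; lra).
  assert (s3 : sin (3 * t) <> 0) by (apply Rgt_not_eq, sin_gt_0; lra).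
  assert (E21 : 2 * t - t = t) by ring.
  assert (E31 : 3 * t - t = 2 * t) by ring.
  apply subgroup_dense; [apply RU0 | |].
  - intros x y. apply RU_real_sub with t (2 * t); auto. now rewrite E21.
  - apply small_pos_of_contraction
      with (1 := RU1 n) (c := sin (3 * t) * sin t / (sin (2 * t) * sin (2 * t))).
    + intros x Hx. rewrite <- E21 at 2. rewrite <- E31 at 2.
      apply RU_real_scale; auto. now rewrite E31.
    + now apply contraction_factor_bounds.
Qed.

Theorem mainTheorem11 (n : nat) (hn : (3 < n)%nat) : dense_in_C (RU n).
Proof.
  destruct (PI_div_bounds n hn) as [t0 t3].
  pose proof (in_Un_cexpi_mul n) as U. set (t := PI / INR n) in *.
  assert (U1 : in_Un n (cexpi t)) by (rewrite <- (Rmult_1_l t); apply U).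
  assert (s1 : 0 < sin t) by (apply sin_gt_0; lra).
  assert (s2 : 0 < sin (2 * t)) by (apply sin_gt_0; lra).
  assert (E21 : sin (2 * t - t) = sin t) by (f_equal; ring).
  apply (dense_in_C_of_dense_line (fun x => RU n (x, 0)) (RU n)
           (sin (2 * t) / sin (2 * t - t) * cos t) (sin (2 * t) / sin (2 * t - t) * sin t)).
  - apply RU_real_axis_dense with t; auto.
  - rewrite E21. replace (sin (2 * t) / sin t * sin t) with (sin (2 * t)) by (field; lra).
    lra.
  - intros x y. apply RU_real_comb; auto; lra.
Qed.
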